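(* Let $R$ be a commutative ring with identity and $M$ a non-zero comultiplication $R$-module. If $G'(M)$ is non-null and connected, then $\mathrm{diam}(G'(M))\le 2$.
   Context: An $R$-module $M$ is a comultiplication module if for every submodule $N$ of $M$ there is an ideal $I$ of $R$ with $N=\mathrm{Ann}_M(I)$. A submodule $N$ of $M$ is large if $N\cap L\neq 0$ for every non-zero submodule $L$ of $M$. The large sum graph $G'(M)$ has as vertex set the set of all non-zero non-large submodules of $M$, and two distinct vertices $N,K$ are adjacent iff $N+K$ is non-large in $M$. The diameter is the supremum of the distances between pairs of vertices. *)

From HB Require Import structures.
From mathcomp Require Import all_boot all_order all_algebra.
Set Implicit Arguments. Unset Strict Implicit. Unset Printing Implicit Defensive.
Import GRing.Theory.
Local Open Scope ring_scope.

Section ModuleDefs.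
Variables (R : comPzRingType) (M : lmodType R).

Definition is_submodule (N : M -> Prop) : Prop :=
  [/\ N 0,
      (forall x y, N x -> N y -> N (x + y)) &
      (forall (r : R) x, N x -> N (r *: x))].

Definition is_ideal (I : R -> Prop) : Prop :=
  [/\ I 0,
      (forall a b, I a -> I b -> I (a + b)) &
      (forall r a, I a -> I (r * a))].

Definition annM (I : R -> Prop) : M -> Prop :=
  fun m => forall r, I r -> r *: m = 0.

Definition same_sub (N K : M -> Prop) : Prop := forall m, N m <-> K m.

Definition comultiplication_module : Prop :=
  forall N, is_submodule N -> exists I, is_ideal I /\ same_sub N (annM I).

Definition nonzero_module : Prop := exists m : M, m <> 0.

Definition nonzero_sub (N : M -> Prop) : Prop := exists m, N m /\ m <> 0.

Definition large (N : M -> Prop) : Prop :=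
  forall L, is_submodule L -> nonzero_sub L -> exists m, N m /\ L m /\ m <> 0.

Definition sum_sub (N K : M -> Prop) : M -> Prop :=
  fun m => exists a b, N a /\ K b /\ m = a + b.

Definition lsg_vertex (N : M -> Prop) : Prop :=
  [/\ is_submodule N, nonzero_sub N & ~ large N].

Definition lsg_adj (N K : M -> Prop) : Prop :=
  ~ same_sub N K /\ ~ large (sum_sub N K).

Fixpoint lsg_walk_le (n : nat) (N K : M -> Prop) : Prop :=
  match n with
  | O => same_sub N K
  | S n' => lsg_walk_le n' N K \/
            exists L, lsg_vertex L /\ lsg_adj N L /\ lsg_walk_le n' L K
  end.

Definition lsg_non_null : Prop := exists N, lsg_vertex N.

Definition lsg_connected : Prop :=
  forall N K, lsg_vertex N -> lsg_vertex K -> exists n, lsg_walk_le n N K.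

Definition lsg_diam_le (d : nat) : Prop :=
  forall N K, lsg_vertex N -> lsg_vertex K -> lsg_walk_le d N K.

End ModuleDefs.

(* If N + K is large but N and K are not adjacent, a common neighbour L of
   both is found inside N or K.  When N and K meet, L is N ∩ K.  Otherwise,
   since M is a comultiplication module, each component n of an element
   n + k of N ⊕ K lies in the cyclic submodule R(n + k), so every submodule
   containing n + k contains n and k.  A walk from N to K in G'(M) has an
   edge X — Y with X + K large and Y + K not large; the vertex Y then meets
   N or K, and the intersection is the required L. *)

From mathcomp Require Import all_boot all_order all_algebra.
From Stdlib Require Import Classical.
Import GRing.Theory.
Local Open Scope ring_scope.
Set Implicit Arguments. Unset Strict Implicit.

Section LargeSumGraph.
Variables (R : comPzRingType) (M : lmodType R).
Implicit Types (A B N K L X Y Z : M -> Prop).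

Local Notation "A `<=` B" := (forall m : M, A m -> B m) (at level 70).

Definition trivial_meet N K := forall m, N m -> K m -> m = 0.

Definition cyclic_sub (x : M) : M -> Prop := fun m => exists r : R, m = r *: x.

Lemma submod0 N : is_submodule N -> N 0.
Proof. by case. Qed.

Lemma submodD N x y : is_submodule N -> N x -> N y -> N (x + y).
Proof. by case=> _ hD _; apply: hD. Qed.

Lemma submodZ N r x : is_submodule N -> N x -> N (r *: x).
Proof. by case=> _ _ hZ; apply: hZ. Qed.

Lemma submodN N x : is_submodule N -> N x -> N (- x).
Proof. by move=> hN hx; rewrite -scaleN1r; apply: submodZ. Qed.

Lemma submodB N x y : is_submodule N -> N x -> N y -> N (x - y).
Proof. by move=> hN hx hy; apply: submodD => //; apply: submodN. Qed.

Lemma submodI N K : is_submodule N -> is_submodule K ->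
  is_submodule (fun m => N m /\ K m).
Proof.
move=> hN hK; split.
- by split; apply: submod0.
- by move=> x y [? ?] [? ?]; split; apply: submodD.
- by move=> r x [? ?]; split; apply: submodZ.
Qed.

Lemma submod_cyclic x : is_submodule (cyclic_sub x).
Proof.
split.
- by exists 0; rewrite scale0r.
- by move=> a b [r ->] [s ->]; exists (r + s); rewrite scalerDl.
- by move=> r a [s ->]; exists (r * s); rewrite scalerA.
Qed.

Lemma cyclic_sub_id x : cyclic_sub x x.
Proof. by exists 1; rewrite scale1r. Qed.

Lemma cyclic_sub_le N x : is_submodule N -> N x -> cyclic_sub x `<=` N.
Proof. by move=> hN hx m [r ->]; apply: submodZ. Qed.

Lemma sum_subS A B A' B' : A `<=` A' -> B `<=` B' ->
  sum_sub A B `<=` sum_sub A' B'.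
Proof. by move=> hA hB m [a [b [ha [hb ->]]]]; exists a, b; auto. Qed.

Lemma sum_sub_le A B N : is_submodule N -> A `<=` N -> B `<=` N ->
  sum_sub A B `<=` N.
Proof. by move=> hN hA hB m [a [b [ha [hb ->]]]]; apply: submodD; auto. Qed.

Lemma sum_subl A B : is_submodule B -> A `<=` sum_sub A B.
Proof.
by move=> hB a ha; exists a, 0; rewrite addr0; do 2!split=> //; apply: submod0.
Qed.

Lemma sum_subr A B : is_submodule A -> B `<=` sum_sub A B.
Proof.
by move=> hA b hb; exists 0, b; rewrite add0r; split=> //; apply: submod0.
Qed.

Lemma large_subset A B : A `<=` B -> large A -> large B.
Proof.
move=> hAB hA L hL hLnz; have [m [hm [hLm hm0]]] := hA L hL hLnz.
by exists m; auto.
Qed.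

Lemma nlarge_subset A B : A `<=` B -> ~ large B -> ~ large A.
Proof. by move=> hAB hB /(large_subset hAB). Qed.

Section Comultiplication.
Hypothesis comult : comultiplication_module M.

(* Rx = Ann_M(I) for some ideal I; as I kills n + k, each i n = - i k lies in
   N ∩ K = 0, so I kills n as well. *)
Lemma comult_component_cyclic N K n k : is_submodule N -> is_submodule K ->
  trivial_meet N K -> N n -> K k -> cyclic_sub (n + k) n.
Proof.
move=> hN hK hNK hn hk.
have [I [_ hI]] := comult (submod_cyclic (n + k)).
have /hI hIx := cyclic_sub_id (n + k).
apply/hI => i hi; apply: hNK; first exact: submodZ.
have /eqP := hIx i hi; rewrite scalerDr addr_eq0 => /eqP ->.
by apply: submodN => //; apply: submodZ.
Qed.

Lemma comult_components N K X n k : is_submodule N -> is_submodule K ->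
  is_submodule X -> trivial_meet N K -> N n -> K k -> X (n + k) -> X n /\ X k.
Proof.
move=> hN hK hX hNK hn hk hXx.
have hXn : X n.
  exact: cyclic_sub_le hXx _ (comult_component_cyclic hN hK hNK hn hk).
by split=> //; rewrite -(addKr n k) addrC; apply: submodB.
Qed.

Lemma large_sum_meet N K Y : is_submodule N -> is_submodule K ->
  is_submodule Y -> trivial_meet N K -> large (sum_sub N K) -> nonzero_sub Y ->
  nonzero_sub (fun m => Y m /\ N m) \/ nonzero_sub (fun m => Y m /\ K m).
Proof.
move=> hN hK hY hNK hl hYnz.
have [_ [[n [k [hn [hk ->]]]] [hYx hx0]]] := hl Y hY hYnz.
have [hYn hYk] := comult_components hN hK hY hNK hn hk hYx.
have [n0|n0] := eqVneq n 0.
- by right; exists k; split=> // k0; apply: hx0; rewrite n0 k0 addr0.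
- by left; exists n; split=> //; apply/eqP.
Qed.

(* A nonzero element of Z ∩ (N + L) splits into components in Z; a nonzero
   component in L is already in X + L, while a nonzero component n in N is
   used through Rn ∩ (X + K) ≠ 0, whose elements lie in X. *)
Lemma large_sum_transfer N K L X : is_submodule N -> is_submodule K ->
  is_submodule L -> is_submodule X -> trivial_meet N K -> L `<=` K ->
  large (sum_sub X K) -> large (sum_sub N L) -> large (sum_sub X L).
Proof.
move=> hN hK hL hX hNK hLK hXK hNL Z hZ hZnz.
have [_ [[n [w [hn [hw ->]]]] [hZx hx0]]] := hNL Z hZ hZnz.
have [hZn hZw] := comult_components hN hK hZ hNK hn (hLK _ hw) hZx.
have [w0|w0] := eqVneq w 0; last first.
  by exists w; split; [apply: sum_subr | split=> //; apply/eqP].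
have hRnz : nonzero_sub (cyclic_sub n).
  exists n; split; first exact: cyclic_sub_id.
  by move=> n0; apply: hx0; rewrite n0 w0 addr0.
have [u [[x [k [hx [hk hu]]]] [hRu hu0]]] := hXK _ (submod_cyclic n) hRnz.
have hNu : N u by apply: cyclic_sub_le hRu.
have [hXu _] : X u /\ X (- k).
  by apply: comult_components hNK hNu (submodN hK hk) _ => //; rewrite hu addrK.
exists u; split; first exact: sum_subl.
by split=> //; apply: cyclic_sub_le hRu.
Qed.

End Comultiplication.

Lemma lsg_walk2 N K L : lsg_vertex L -> lsg_vertex K ->
  lsg_adj N L -> lsg_adj L K -> lsg_walk_le 2 N K.
Proof.
by move=> hL hK hNL hLK; right; exists L; do 2!split=> //; right; exists K.
Qed.

Lemma lsg_walk2_via_subl N K L : lsg_vertex N -> lsg_vertex K ->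
  is_submodule L -> nonzero_sub L -> L `<=` N -> ~ same_sub N L ->
  ~ same_sub L K -> ~ large (sum_sub L K) -> lsg_walk_le 2 N K.
Proof.
move=> [hN _ hNl] hK hL hLnz hLN hNL hLK hLKl.
apply: (@lsg_walk2 _ _ L) => //; first by split=> //; apply: nlarge_subset hNl.
by split=> //; apply: nlarge_subset hNl; apply: sum_sub_le.
Qed.

Lemma lsg_walk2_via_subr N K L : lsg_vertex N -> lsg_vertex K ->
  is_submodule L -> nonzero_sub L -> L `<=` K -> ~ same_sub N L ->
  ~ same_sub L K -> ~ large (sum_sub N L) -> lsg_walk_le 2 N K.
Proof.
move=> hN hVK hL hLnz hLK hNL hLK' hNLl; have [hK _ hKl] := hVK.
apply: (@lsg_walk2 _ _ L) => //; first by split=> //; apply: nlarge_subset hKl.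
by split=> //; apply: nlarge_subset hKl; apply: sum_sub_le.
Qed.

(* Along a walk from A to the vertex K with A + K large there is an edge
   X — Y with X + K large and Y + K not large: the walk cannot end with
   X + K large, as X = K is not large. *)
Lemma lsg_walk_crossing K n A : lsg_vertex K -> is_submodule A ->
  lsg_walk_le n A K -> large (sum_sub A K) ->
  exists X Y, [/\ is_submodule X, large (sum_sub X K), lsg_vertex Y,
     ~ large (sum_sub X Y) & ~ large (sum_sub Y K)].
Proof.
move=> [hK _ hKl]; elim: n A => [|n IH] A hA /=.
  move=> hAK hl; exfalso; apply: hKl; apply: large_subset hl.
  by apply: sum_sub_le => // m /hAK.
case=> [hw|[L [hL [[_ hAL] hw]]]] hl; first exact: IH hw hl.
have [hLK|hLK] := classic (large (sum_sub L K)); last by exists A, L.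
by apply: IH hLK => //; case: hL.
Qed.

Lemma lsg_walk2_meet N K : lsg_vertex N -> lsg_vertex K ->
  large (sum_sub N K) -> nonzero_sub (fun m => N m /\ K m) ->
  lsg_walk_le 2 N K.
Proof.
move=> hVN hVK hl hNKnz; have [hN _ hNl] := hVN; have [hK _ hKl] := hVK.
apply: (@lsg_walk2_via_subl _ _ (fun m => N m /\ K m)) => //.
- exact: submodI.
- by move=> m [].
- move=> hNNK; apply: hKl; apply: large_subset hl.
  by apply: sum_sub_le => // m /hNNK [].
- move=> hNKK; apply: hNl; apply: large_subset hl.
  by apply: sum_sub_le => // m /hNKK [].
- by apply: nlarge_subset hKl; apply: sum_sub_le => // m [].
Qed.

Lemma lsg_walk2_trivial_meet N K n : comultiplication_module M ->
  lsg_vertex N -> lsg_vertex K -> trivial_meet N K -> large (sum_sub N K) ->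
  lsg_walk_le n N K -> lsg_walk_le 2 N K.
Proof.
move=> comult hVN hVK hNK hl hw; have [hN _ _] := hVN; have [hK _ _] := hVK.
have [X [Y [hX hXK [hY hYnz _] hXY hYK]]] := lsg_walk_crossing hVK hN hw hl.
have hnotK L : nonzero_sub L -> L `<=` N -> ~ same_sub L K.
  move=> [m [hm hm0]] hLN hLK; apply: hm0.
  by apply: hNK; [apply: hLN | apply/hLK].
have hnotN L : nonzero_sub L -> L `<=` K -> ~ same_sub N L.
  move=> [m [hm hm0]] hLK hNL; apply: hm0.
  by apply: hNK; [apply/hNL | apply: hLK].
case: (large_sum_meet comult hN hK hY hNK hl hYnz) => hLnz.
- apply: (@lsg_walk2_via_subl _ _ (fun m => Y m /\ N m)) => //.
  + exact: submodI.
  + by move=> m [].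
  + move=> hNYN; apply: hYK; apply: large_subset hl.
    by apply: sum_subS => // m /hNYN [].
  + by apply: hnotK => // m [].
  + by apply: nlarge_subset hYK; apply: sum_subS => // m [].
- have hLK : (fun m => Y m /\ K m) `<=` K by move=> m [].
  apply: (@lsg_walk2_via_subr _ _ (fun m => Y m /\ K m)) => //.
  + exact: submodI.
  + exact: hnotN.
  + move=> hYKK; apply: hXY; apply: large_subset hXK.
    by apply: sum_subS => // m /hYKK [].
  + move=> hNL; apply: hXY; apply: large_subset (large_sum_transfer comult hN hK
      (submodI hY hK) hX hNK hLK hXK hNL).
    by apply: sum_subS => // m [].
Qed.

End LargeSumGraph.

Theorem theorem2p7 (R : comPzRingType) (M : lmodType R) :
  nonzero_module M -> comultiplication_module M ->
  lsg_non_null M -> lsg_connected M -> lsg_diam_le M 2.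
Proof.
move=> _ comult _ hconn N K hVN hVK.
have [n hw] := hconn N K hVN hVK.
have [hNK|hNK] := classic (same_sub N K); first by left; left.
have [hl|hl] := classic (large (sum_sub N K)); last first.
  by right; exists K; do 2!split=> //; left.
have [hmeet|hmeet] := classic (nonzero_sub (fun m => N m /\ K m)).
  exact: lsg_walk2_meet.
apply: lsg_walk2_trivial_meet hw => // m hNm hKm.
by apply: NNPP => hm0; apply: hmeet; exists m.
Qed.
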